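(* Let $(A\mid R)$ and $(A'\mid R')$ be finite presentations such that $(A'\mid R')$ is obtained from $(A\mid R)$ by one of the transformations (I)–(VII). Then $\langle A\mid R\rangle\cong\langle A'\mid R'\rangle$.
   Context: $\mathbb{M}_A$ is the free magma on a non-empty set $A$ (non-associative words with $x+y=(x,y)$); $\mathbb{M}_A^2$ has componentwise operation. A closed congruence on $\mathbb{M}_A$ is an equivalence relation $\theta$ that is a submagma of $\mathbb{M}_A^2$ and satisfies: $(x+x',y+y')\in\theta\Rightarrow (x,y),(x',y')\in\theta$. For $X\subseteq\mathbb{M}_A^2$, $\boxminus(X)$ is the least closed congruence containing $X$. A finite presentation is $(A\mid R)$ with $A$ finite non-empty and $R\subseteq\mathbb{M}_A^2$ finite; $\langle A\mid R\rangle=\mathbb{M}_A/\boxminus(R)$. The minimal generating set of $\mathbb{M}_A^2$ is $\mathcal{G}(\mathbb{M}_A^2)=(A\times\mathbb{M}_A)\cup(\mathbb{M}_A\times A)$; for $p\in\mathbb{M}_A^2$, $\mathbf{g}(p)$ is defined recursively: $\mathbf{g}(p)=\mathbf{g}(p_1)\cup\mathbf{g}(p_2)$ if $p=p_1+p_2$ with $p_1,p_2\in\mathbb{M}_A^2$ (i.e. both coordinates of $p$ are decomposable), and $\mathbf{g}(p)=\{p\}$ otherwise; for a set $S$, $\mathbf{g}(S)=\bigcup_{p\in S}\mathbf{g}(p)$. For $y\in\mathbb{M}_A$, $g(y)\subseteq A$ is the set of letters occurring in $y$. For $a\in A$, $y\in\mathbb{M}_A$, $f_{a\to y}:\mathbb{M}_A\to\mathbb{M}_A$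 is the homomorphism sending $a\mapsto y$ and fixing other generators, and $f^2_{a\to y}$ applies it to both coordinates of each pair of a set. The transformations are: (I) if some $(x,y)\in R$ is not in $\mathcal{G}(\mathbb{M}_A^2)$, replace by $(A\mid\mathbf{g}(R))$. (II) if $(a,y),(a,y')\in R\cap(A\times(\mathbb{M}_A\setminus A))$ with $y\neq y'$, replace by $(A\mid (R\setminus\{(a,y')\})\cup\mathbf{g}((y,y')))$. (III) if $(x,b),(x',b)\in R\cap((\mathbb{M}_A\setminus A)\times A)$ with $x\neq x'$, replace by $(A\mid (R\setminus\{(x',b)\})\cup\mathbf{g}((x,x')))$. (IV) if some $(x,y)\in R$ has $x\notin A$, replace by $(A\mid (R\setminus\{(x,y)\})\cup\{(y,x)\})$. (V) if some $a\in A$ has $(a,y)\notin R$ for all $y\in\mathbb{M}_A$ and $(a,a)\notin R$, replace by $(A\mid R\cup\{(a,a)\})$. (VI) if $(a,y),(a',y)\in R\cap(A\times\mathbb{M}_A)$ with $a\neq a'$, replace by $(A\setminus\{a'\}\mid f^2_{a'\to a}(R\setminus\{(a',y)\}))$. (VII) if some $(a,y)\in R\cap(A\times\mathbb{M}_A)$ has $a\notin g(y)$ and $(a,y')\notin R$ for every $y'\neq y$, replace by $(A\setminus\{a\}\mid f^2_{a\to y}(R))$. *)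

From mathcomp Require Import all_boot.
From mathcomp Require Import boolp classical_sets cardinality.
Set Implicit Arguments. Unset Strict Implicit. Unset Printing Implicit Defensive.
Local Open Scope classical_set_scope.

Inductive word (T : Type) : Type :=
  | Var : T -> word T
  | Op  : word T -> word T -> word T.   (* Op x y = (x, y) = x + y *)
Arguments Var {T}. Arguments Op {T}.

Section Words.
Variable T : eqType.

Fixpoint letters (w : word T) : set T :=
  match w with Var b => [set b] | Op u v => letters u `|` letters v end.

Definition inM (A : set T) (w : word T) : Prop := letters w `<=` A.
Definition inM2 (A : set T) (p : word T * word T) : Prop := inM A p.1 /\ inM A p.2.

Definition isVar (w : word T) : Prop := exists b, w = Var b.

Definition inG (A : set T) (p : word T * word T) : Prop :=
  (exists2 a, A a & p.1 = Var a) /\ inM A p.2 \/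
  inM A p.1 /\ (exists2 a, A a & p.2 = Var a).

Definition closed_congr (A : set T) (th : set (word T * word T)) : Prop :=
  [/\ th `<=` inM2 A,
      (forall x, inM A x -> th (x, x)),
      (forall x y, th (x, y) -> th (y, x)) &
      (forall x y z, th (x, y) -> th (y, z) -> th (x, z))] /\
  (forall x y x' y', th (x, y) -> th (x', y') -> th (Op x x', Op y y')) /\
  (forall x y x' y', th (Op x x', Op y y') -> th (x, y) /\ th (x', y')).

Definition boxminus (A : set T) (X : set (word T * word T)) : set (word T * word T) :=
  fun p => forall th, closed_congr A th -> X `<=` th -> th p.

Fixpoint gpair (x y : word T) {struct x} : set (word T * word T) :=
  match x, y with
  | Op x1 x2, Op y1 y2 => gpair x1 y1 `|` gpair x2 y2
  | _, _ => [set (x, y)]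
  end.
Definition gp (p : word T * word T) := gpair p.1 p.2.
Definition gset (S : set (word T * word T)) : set (word T * word T) :=
  \bigcup_(p in S) gp p.

Fixpoint subst (a : T) (y : word T) (w : word T) : word T :=
  match w with
  | Var b => if b == a then y else Var b
  | Op u v => Op (subst a y u) (subst a y v)
  end.
Definition subst2 (a : T) (y : word T) (S : set (word T * word T)) :=
  [set (subst a y p.1, subst a y p.2) | p in S].

Definition fin_pres (A : set T) (R : set (word T * word T)) : Prop :=
  [/\ finite_set A, A !=set0, finite_set R & R `<=` inM2 A].

Definition step (A : set T) (R : set (word T * word T))
    (A' : set T) (R' : set (word T * word T)) : Prop :=
  (* (I) *)
  ((exists2 p, R p & ~ inG A p) /\ A' = A /\ R' = gset R) \/
  (* (II) *)
  (exists a y y', [/\ R (Var a, y), R (Var a, y'), ~ isVar y, ~ isVar y' & y <> y'] /\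
      A' = A /\ R' = (R `\ (Var a, y')) `|` gp (y, y')) \/
  (* (III) *)
  (exists x x' b, [/\ R (x, Var b), R (x', Var b), ~ isVar x, ~ isVar x' & x <> x'] /\
      A' = A /\ R' = (R `\ (x', Var b)) `|` gp (x, x')) \/
  (* (IV) *)
  (exists x y, [/\ R (x, y), ~ isVar x, A' = A & R' = (R `\ (x, y)) `|` [set (y, x)]]) \/
  (* (V) *)
  (exists a, [/\ A a, (forall y, ~ R (Var a, y)), ~ R (Var a, Var a),
      A' = A & R' = R `|` [set (Var a, Var a)]]) \/
  (* (VI) *)
  (exists a a' y, [/\ R (Var a, y), R (Var a', y), a <> a',
      A' = A `\ a' & R' = subst2 a' (Var a) (R `\ (Var a', y))]) \/
  (* (VII) *)
  (exists a y, [/\ R (Var a, y), ~ letters y a, (forall y', y' <> y -> ~ R (Var a, y')),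
      A' = A `\ a & R' = subst2 a y R]).

End Words.

Record magma := Magma { mcarrier :> Type; mop : mcarrier -> mcarrier -> mcarrier }.

Definition magma_iso (M N : magma) : Prop :=
  exists f : M -> N, bijective f /\ forall u v, f (mop u v) = mop (f u) (f v).

Section Quotient.
Variable T : eqType.
Variables (A : set T) (th : set (word T * word T)).

Definition cls (x : word T) : set (word T) := [set y | th (x, y)].
Definition qcarrier := {S : set (word T) | exists x, inM A x /\ S = cls x}.

Definition qrep (S : qcarrier) : word T := projT1 (cid (projT2 S)).
Lemma qrepP (S : qcarrier) : inM A (qrep S) /\ sval S = cls (qrep S).
Proof. exact: (projT2 (cid (projT2 S))). Qed.

Lemma inM_Op x y : inM A x -> inM A y -> inM A (Op x y).
Proof. by move=> hx hy z [/hx|/hy]. Qed.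

Definition qop (S S' : qcarrier) : qcarrier :=
  exist _ (cls (Op (qrep S) (qrep S')))
    (ex_intro _ (Op (qrep S) (qrep S'))
       (conj (inM_Op (qrepP S).1 (qrepP S').1) erefl)).

Definition quot_magma : magma := Magma qop.
End Quotient.

Definition pres_magma (T : eqType) (A : set T) (R : set (word T * word T)) : magma :=
  quot_magma A (boxminus A R).

From mathcomp Require Import all_boot.
From mathcomp Require Import boolp classical_sets functions cardinality.
Set Implicit Arguments. Unset Strict Implicit. Unset Printing Implicit Defensive.
Local Open Scope classical_set_scope.

(* Transformations (I)-(V) keep the alphabet, and every relation of either
   presentation is derivable from those of the other by the closure rules of a
   closed congruence (the converse of compatibility with + is what splits a pair
   p into g(p)).  Hence both presentations have the same closed congruence and
   literally the same quotient.
   Transformations (VI) and (VII) delete a letter a that boxminus(R) identifies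
   with a word u over the remaining letters.  The substitution f_{a->u} is the
   identity on M_{A\a}, keeps every word in its class, and maps R into
   boxminus(R') while R' lies in boxminus(R); so it induces an isomorphism of the
   quotients. *)

Section ClosedCongruence.
Variables (T : eqType) (A : set T) (th : set (word T * word T)).
Hypothesis thC : closed_congr A th.

Lemma congr_inM2 : th `<=` inM2 A.
Proof. by case: thC => -[]. Qed.

Lemma congr_refl x : inM A x -> th (x, x).
Proof. by case: thC => -[_ refl _ _] _; apply: refl. Qed.

Lemma congr_sym x y : th (x, y) -> th (y, x).
Proof. by case: thC => -[_ _ sym _] _; apply: sym. Qed.

Lemma congr_trans x y z : th (x, y) -> th (y, z) -> th (x, z).
Proof. by case: thC => -[_ _ _ trans] _; apply: trans. Qed.

Lemma congr_Op x y x' y' : th (x, y) -> th (x', y') -> th (Op x x', Op y y').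
Proof. by case: thC => _ [comp _]; apply: comp. Qed.

Lemma congr_Op_inv x y x' y' : th (Op x x', Op y y') -> th (x, y) /\ th (x', y').
Proof. by case: thC => _ [_ dec]; apply: dec. Qed.

Lemma gpair_subP x y : gpair x y `<=` th <-> th (x, y).
Proof.
elim: x y => [b|x1 IH1 x2 IH2] [c|y1 y2] /=; try by split=> [/(_ _ erefl)|h _ ->].
split=> [h | /congr_Op_inv[/IH1 h1 /IH2 h2]].
- by apply: congr_Op; [apply/IH1 | apply/IH2] => q hq; apply: h; [left|right].
- by move=> q [/h1|/h2].
Qed.

Lemma cls_eq x z : th (x, z) -> cls th x = cls th z.
Proof.
move=> xz; rewrite funeqE => w; rewrite propeqE /cls /=.
by split; [apply: congr_trans (congr_sym xz) | apply: congr_trans xz].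
Qed.

Lemma cls_eq_rel x z : inM A z -> cls th x = cls th z -> th (x, z).
Proof. by move=> zA e; have : cls th z z := congr_refl zA; rewrite -e. Qed.

Definition qclass x (xA : inM A x) : qcarrier A th :=
  exist _ (cls th x) (ex_intro _ x (conj xA erefl)).

Lemma qcarrier_eq (S S' : qcarrier A th) : sval S = sval S' -> S = S'.
Proof. by case: S S' => [s hs] [s' hs'] /= e; apply: eq_exist. Qed.

Lemma qrepK (S : qcarrier A th) : qclass (qrepP S).1 = S.
Proof. by apply: qcarrier_eq => /=; case: (qrepP S) => _ ->. Qed.

Lemma qcarrierP (S : qcarrier A th) : exists x (xA : inM A x), S = qclass xA.
Proof. by exists (qrep S), (qrepP S).1; rewrite qrepK. Qed.

Lemma qclass_eqE x z (xA : inM A x) (zA : inM A z) :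
  qclass xA = qclass zA <-> th (x, z).
Proof.
split=> [/(congr1 sval)/= /(cls_eq_rel zA) // | xz].
by apply: qcarrier_eq; apply: cls_eq.
Qed.

Lemma qclass_rep x (xA : inM A x) : th (qrep (qclass xA), x).
Proof. by apply/(qclass_eqE (qrepP _).1 xA); rewrite qrepK. Qed.

Lemma qop_qclass x y (xA : inM A x) (yA : inM A y) :
  qop (qclass xA) (qclass yA) = qclass (inM_Op xA yA).
Proof. by apply: qcarrier_eq; apply: cls_eq; apply: congr_Op; apply: qclass_rep. Qed.

End ClosedCongruence.

Section QuotientIso.
Variables (T : eqType) (A A' : set T) (th th' : set (word T * word T)).
Hypotheses (thC : closed_congr A th) (thC' : closed_congr A' th').
Variable phi : word T -> word T.
Hypothesis phi_inM : forall x, inM A x -> inM A' (phi x).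
Hypothesis phi_Op : forall u v, phi (Op u v) = Op (phi u) (phi v).
Hypothesis phi_rel :
  forall x z, inM A x -> inM A z -> th (x, z) <-> th' (phi x, phi z).
Hypothesis phi_surj : forall w, inM A' w -> exists2 x, inM A x & th' (phi x, w).

Let qphi (S : qcarrier A th) : qcarrier A' th' := qclass th' (phi_inM (qrepP S).1).

Let qphi_qclass x (xA : inM A x) : qphi (qclass th xA) = qclass th' (phi_inM xA).
Proof.
apply: qcarrier_eq; apply: (cls_eq thC').
by apply/(phi_rel (qrepP _).1 xA); exact: qclass_rep.
Qed.

Lemma quot_magma_iso : magma_iso (quot_magma A th) (quot_magma A' th').
Proof.
exists qphi; split; last first.
  move=> /= S S'.
  have [x [xA ->]] := qcarrierP S; have [y [yA ->]] := qcarrierP S'.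
  rewrite (qop_qclass thC) !qphi_qclass (qop_qclass thC').
  by apply: qcarrier_eq; rewrite /= phi_Op.
rewrite -setTT_bijective; split=> // [S S' _ _ | S' _].
- have [x [xA ->]] := qcarrierP S; have [z [zA ->]] := qcarrierP S'.
  rewrite !qphi_qclass => /(qclass_eqE thC') /(phi_rel xA zA) xz.
  exact/(qclass_eqE thC).
- have [w [wA ->]] := qcarrierP S'; have [x xA xw] := phi_surj wA.
  by exists (qclass th xA) => //; rewrite qphi_qclass; apply/(qclass_eqE thC').
Qed.

End QuotientIso.

Section ClosedCongruenceConstructions.
Variable T : eqType.
Implicit Types (A B : set T) (th : set (word T * word T)).

Lemma inM_OpP A x y : inM A (Op x y) <-> inM A x /\ inM A y.
Proof. by rewrite /inM /= subUset. Qed.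

Lemma closed_congr_inM2 A : closed_congr A (inM2 A).
Proof.
split; [split|split] => //.
- by move=> x y [].
- by move=> x y z [? _] [_ ?].
- by move=> x y x' y' [? ?] [? ?]; split; apply/inM_OpP.
- by move=> x y x' y' [/inM_OpP[? ?] /inM_OpP[? ?]].
Qed.

Lemma closed_congr_restr A B th :
  closed_congr A th -> B `<=` A -> closed_congr B (th `&` inM2 B).
Proof.
move=> thC BA; split; [split|split].
- by move=> p [].
- by move=> x xB; split; [apply: (congr_refl thC) => b /xB /BA|].
- by move=> x y [/(congr_sym thC) ? [? ?]].
- by move=> x y z [/(congr_trans thC) xyz [? _]] [/xyz ? [_ ?]].
- move=> x y x' y' [xy [? ?]] [xy' [? ?]].
  by split; [apply: (congr_Op thC) | split; apply/inM_OpP].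
- move=> x y x' y' [/(congr_Op_inv thC)[? ?] [/inM_OpP[? ?] /inM_OpP[? ?]]].
  by split.
Qed.

Lemma closed_congr_preim A B th (phi : word T -> word T) :
  closed_congr B th -> (forall x, inM A x -> inM B (phi x)) ->
  (forall u v, phi (Op u v) = Op (phi u) (phi v)) ->
  closed_congr A [set p | inM2 A p /\ th (phi p.1, phi p.2)].
Proof.
move=> thC phi_inM phi_Op; split; [split|split].
- by move=> p [].
- by move=> x xA; split; [|apply/(congr_refl thC)/phi_inM].
- by move=> x y [[? ?] /(congr_sym thC)].
- by move=> x y z [[? _] /(congr_trans thC) xyz] [[_ ?] /xyz].
- move=> x y x' y' [[? ?] xy] [[? ?] xy'] /=; rewrite !phi_Op.
  by split; [split; apply/inM_OpP | apply: (congr_Op thC)].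
- move=> x y x' y' [[/inM_OpP[? ?] /inM_OpP[? ?]]] /=.
  by rewrite !phi_Op => /(congr_Op_inv thC)[? ?].
Qed.

End ClosedCongruenceConstructions.

Section Boxminus.
Variables (T : eqType) (A : set T).
Implicit Types (R S th : set (word T * word T)).

Lemma sub_boxminus R : R `<=` boxminus A R.
Proof. by move=> p Rp th _; apply. Qed.

Lemma boxminus_min R th : closed_congr A th -> R `<=` th -> boxminus A R `<=` th.
Proof. by move=> thC Rth p; apply. Qed.

Lemma closed_congr_boxminus R : R `<=` inM2 A -> closed_congr A (boxminus A R).
Proof.
move=> RA; split; [split|split].
- exact: boxminus_min (closed_congr_inM2 A) RA.
- by move=> x xA th thC _; exact: (congr_refl thC xA).
- by move=> x y xy th thC Rth; exact: (congr_sym thC (xy _ thC Rth)).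
- move=> x y z xy yz th thC Rth.
  exact: (congr_trans thC (xy _ thC Rth) (yz _ thC Rth)).
- move=> x y x' y' xy xy' th thC Rth.
  exact: (congr_Op thC (xy _ thC Rth) (xy' _ thC Rth)).
- move=> x y x' y' h; split=> th thC Rth.
  all: by have [] := congr_Op_inv thC (h _ thC Rth).
Qed.

Lemma boxminus_eq R S : R `<=` inM2 A -> S `<=` inM2 A ->
  R `<=` boxminus A S -> S `<=` boxminus A R -> boxminus A R = boxminus A S.
Proof.
move=> RA SA RS SR; apply/seteqP; split.
- exact: boxminus_min (closed_congr_boxminus SA) RS.
- exact: boxminus_min (closed_congr_boxminus RA) SR.
Qed.

Lemma gp_inM2 p : inM2 A p -> gp p `<=` inM2 A.
Proof. by case: p => x y; exact: (gpair_subP (closed_congr_inM2 A) x y).2. Qed.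

Lemma gp_boxminus R p : R `<=` inM2 A -> boxminus A R p -> gp p `<=` boxminus A R.
Proof. by case: p => x y RA; exact: (gpair_subP (closed_congr_boxminus RA) x y).2. Qed.

Lemma boxminus_gp R p : R `<=` inM2 A -> gp p `<=` boxminus A R -> boxminus A R p.
Proof. by case: p => x y RA; exact: (gpair_subP (closed_congr_boxminus RA) x y).1. Qed.

End Boxminus.

Section SameAlphabet.
Variables (T : eqType) (A : set T) (R : set (word T * word T)).
Hypothesis RA : R `<=` inM2 A.

Let RC := closed_congr_boxminus RA.

Lemma boxminus_gset : boxminus A (gset R) = boxminus A R.
Proof.
have gRA : gset R `<=` inM2 A by move=> q [p /RA /gp_inM2]; apply.
apply: boxminus_eq => //.
- by move=> q [p Rp]; exact: (gp_boxminus RA (sub_boxminus Rp)).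
- move=> [x y] Rxy; apply: boxminus_gp gRA _ => q gq.
  by apply: sub_boxminus; exists (x, y).
Qed.

Lemma boxminus_exchange q S : S `<=` inM2 A ->
  boxminus A ((R `\ q) `|` S) q -> S `<=` boxminus A R ->
  boxminus A ((R `\ q) `|` S) = boxminus A R.
Proof.
move=> SA q' SR.
have R'A : (R `\ q) `|` S `<=` inM2 A by move=> p [[/RA]|/SA].
apply: boxminus_eq => //.
- by move=> p [[Rp _]|/SR //]; apply: sub_boxminus.
- move=> p Rp; have [-> //|pq] := pselect (p = q).
  by apply: sub_boxminus; left.
Qed.

Lemma boxminus_common_fst c y y' : R (c, y) -> R (c, y') -> y <> y' ->
  boxminus A ((R `\ (c, y')) `|` gp (y, y')) = boxminus A R.
Proof.
move=> Rcy Rcy' yy'.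
have yy'A : inM2 A (y, y') by split; [exact: (RA Rcy).2 | exact: (RA Rcy').2].
have R'A : (R `\ (c, y')) `|` gp (y, y') `<=` inM2 A.
  by move=> p [[/RA]|/(gp_inM2 yy'A)].
have R'C := closed_congr_boxminus R'A.
apply: boxminus_exchange (gp_inM2 yy'A) _ _.
- apply: (congr_trans R'C (y := y)).
    by apply: sub_boxminus; left; split=> //; case=> /yy'.
  by apply: boxminus_gp R'A _ => p gpp; apply: sub_boxminus; right.
- apply: gp_boxminus RA _.
  exact: (congr_trans RC (congr_sym RC (sub_boxminus Rcy)) (sub_boxminus Rcy')).
Qed.

Lemma boxminus_common_snd x x' c : R (x, c) -> R (x', c) -> x <> x' ->
  boxminus A ((R `\ (x', c)) `|` gp (x, x')) = boxminus A R.
Proof.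
move=> Rxc Rx'c xx'.
have xx'A : inM2 A (x, x') by split; [exact: (RA Rxc).1 | exact: (RA Rx'c).1].
have R'A : (R `\ (x', c)) `|` gp (x, x') `<=` inM2 A.
  by move=> p [[/RA]|/(gp_inM2 xx'A)].
have R'C := closed_congr_boxminus R'A.
apply: boxminus_exchange (gp_inM2 xx'A) _ _.
- apply: (congr_trans R'C (y := x)); last first.
    by apply: sub_boxminus; left; split=> //; case=> /xx'.
  apply: (congr_sym R'C); apply: boxminus_gp R'A _ => p gpp.
  by apply: sub_boxminus; right.
- apply: gp_boxminus RA _.
  exact: (congr_trans RC (sub_boxminus Rxc) (congr_sym RC (sub_boxminus Rx'c))).
Qed.

Lemma boxminus_swap x y : R (x, y) ->
  boxminus A ((R `\ (x, y)) `|` [set (y, x)]) = boxminus A R.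
Proof.
move=> Rxy; have [xA yA] := RA Rxy.
have R'A : (R `\ (x, y)) `|` [set (y, x)] `<=` inM2 A by move=> p [[/RA]|->].
apply: boxminus_exchange.
- by move=> p ->.
- by apply: (congr_sym (closed_congr_boxminus R'A)); apply: sub_boxminus; right.
- by move=> p ->; apply: (congr_sym RC); apply: sub_boxminus.
Qed.

Lemma boxminus_setU_diag x : inM A x ->
  boxminus A (R `|` [set (x, x)]) = boxminus A R.
Proof.
move=> xA; apply: boxminus_eq => //.
- by move=> p [/RA|->].
- by move=> p [/sub_boxminus //|->]; exact: (congr_refl RC xA).
- by move=> p Rp; apply: sub_boxminus; left.
Qed.

End SameAlphabet.

Section Substitution.
Variables (T : eqType) (A : set T) (a : T) (u : word T).
Hypothesis uA : inM (A `\ a) u.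

Lemma inM_subst x : inM A x -> inM (A `\ a) (subst a u x).
Proof.
elim: x => [b|x1 IH1 x2 IH2] /=.
- by case: eqP => [_ //|ba] bA _ ->; split; [apply: bA|].
- by move=> /inM_OpP[/IH1 ? /IH2 ?]; apply/inM_OpP.
Qed.

Lemma subst_id x : inM (A `\ a) x -> subst a u x = x.
Proof.
elim: x => [b|x1 IH1 x2 IH2] /=.
- by move=> /(_ b erefl)[_ ba]; case: eqP.
- by move=> /inM_OpP[/IH1 -> /IH2 ->].
Qed.

Lemma subst2_inM2 S : S `<=` inM2 A -> subst2 a u S `<=` inM2 (A `\ a).
Proof. by move=> SA _ [p /SA[? ?] <-]; split; apply: inM_subst. Qed.

Lemma congr_subst th x :
  closed_congr A th -> th (Var a, u) -> inM A x -> th (x, subst a u x).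
Proof.
move=> thC au; elim: x => [b|x1 IH1 x2 IH2] /=.
- by case: eqP => [-> //|_]; exact: (congr_refl thC).
- by move=> /inM_OpP[/IH1 ? /IH2 ?]; apply: (congr_Op thC).
Qed.

Lemma congr_subst2 th x y : closed_congr A th -> th (Var a, u) ->
  th (x, y) -> th (subst a u x, subst a u y).
Proof.
move=> thC au xy; have [xA yA] := congr_inM2 thC xy.
apply: (congr_trans thC (congr_sym thC (congr_subst thC au xA))).
exact: (congr_trans thC xy (congr_subst thC au yA)).
Qed.

Lemma pres_magma_subst_iso R S : R `<=` inM2 A -> S `<=` R ->
  boxminus A R (Var a, u) ->
  subst2 a u R `<=` boxminus (A `\ a) (subst2 a u S) ->
  magma_iso (pres_magma A R) (pres_magma (A `\ a) (subst2 a u S)).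
Proof.
move=> RA SR au RS'.
have S'A := subst2_inM2 (subset_trans SR RA).
have RC := closed_congr_boxminus RA; have S'C := closed_congr_boxminus S'A.
have subst_Op v w : subst a u (Op v w) = Op (subst a u v) (subst a u w) by [].
apply: (quot_magma_iso RC S'C inM_subst subst_Op) => [x z xA zA | w wA].
- split=> [xz | S'xz].
  + apply: (boxminus_min (closed_congr_preim S'C inM_subst subst_Op) _ xz).2.
    by move=> p Rp; split; [apply: RA | apply: RS'; exists p].
  + have S'_restr : subst2 a u S `<=` boxminus A R `&` inM2 (A `\ a).
      move=> _ [[x' z'] Sxz <-]; split; last by apply: S'A; exists (x', z').
      exact: (congr_subst2 RC au (sub_boxminus (SR _ Sxz))).
    have Aa : A `\ a `<=` A by move=> b [].
    have [sxz _] := boxminus_min (closed_congr_restr RC Aa) S'_restr S'xz.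
    apply: (congr_trans RC (congr_subst RC au xA)).
    exact: (congr_trans RC sxz (congr_sym RC (congr_subst RC au zA))).
- exists w; first by move=> b /wA[].
  by rewrite subst_id //; exact: (congr_refl S'C wA).
Qed.

End Substitution.

Section LetterElimination.
Variables (T : eqType) (A : set T) (R : set (word T * word T)).
Hypothesis RA : R `<=` inM2 A.

Lemma pres_magma_identify_letters a a' y :
  R (Var a, y) -> R (Var a', y) -> a <> a' ->
  magma_iso (pres_magma A R)
            (pres_magma (A `\ a') (subst2 a' (Var a) (R `\ (Var a', y)))).
Proof.
move=> Ray Ra'y aa'.
have RC := closed_congr_boxminus RA.
have aA : inM (A `\ a') (Var a) by move=> _ ->; split; [exact: (RA Ray).1 | exact: aa'].
apply: (pres_magma_subst_iso aA RA) => [p [] //||].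
- exact: (congr_trans RC (sub_boxminus Ra'y) (congr_sym RC (sub_boxminus Ray))).
- move=> _ [p Rp <-]; apply: sub_boxminus.
  have [->|pa'y] := pselect (p = (Var a', y)); last by exists p.
  (* the discarded relation (a', y) has the same image as (a, y) *)
  exists (Var a, y); first by split=> // -[/aa'].
  by rewrite /= eqxx; case: (_ == _).
Qed.

Lemma pres_magma_eliminate_letter a y : R (Var a, y) -> ~ letters y a ->
  magma_iso (pres_magma A R) (pres_magma (A `\ a) (subst2 a y R)).
Proof.
move=> Ray ya.
have yA : inM (A `\ a) y.
  by move=> b yb; split; [exact: (RA Ray).2 | move=> ba; apply: ya; rewrite -ba].
by apply: (pres_magma_subst_iso yA RA) => //; exact: sub_boxminus.
Qed.

End LetterElimination.

Lemma magma_iso_refl (M : magma) : magma_iso M M.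
Proof. by exists id; split=> //; exists id. Qed.

Lemma pres_magma_iso_of_eq (T : eqType) (A : set T) (R R' : set (word T * word T)) :
  boxminus A R' = boxminus A R -> magma_iso (pres_magma A R) (pres_magma A R').
Proof. by rewrite /pres_magma => ->; exact: magma_iso_refl. Qed.

Theorem lemma7p7 (T : eqType) (A A' : set T) (R R' : set (word T * word T)) :
  fin_pres A R -> fin_pres A' R' -> step A R A' R' ->
  magma_iso (pres_magma A R) (pres_magma A' R').
Proof.
case=> _ _ _ RA _.
case=> [[_ [-> ->]]|]; first exact/pres_magma_iso_of_eq/boxminus_gset.
case=> [[a [y [y' [[Ray Ray' _ _ yy'] [-> ->]]]]]|].
  exact/pres_magma_iso_of_eq/boxminus_common_fst.
case=> [[x [x' [b [[Rxb Rx'b _ _ xx'] [-> ->]]]]]|].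
  exact/pres_magma_iso_of_eq/boxminus_common_snd.
case=> [[x [y [Rxy _ -> ->]]]|].
  exact/pres_magma_iso_of_eq/boxminus_swap.
case=> [[a [aA _ _ -> ->]]|].
  by apply/pres_magma_iso_of_eq/boxminus_setU_diag => // _ ->.
case=> [[a [a' [y [Ray Ra'y aa' -> ->]]]]|[a [y [Ray ya _ -> ->]]]].
- exact: pres_magma_identify_letters.
- exact: pres_magma_eliminate_letter.
Qed.
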